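(* Let $\sqsubseteq$ be any of the stochastic simulation pre-orders $\sqsubseteq^S_i$, $\sqsubseteq^S_\pi$, $\sqsubseteq^S_m$. There is no stochastic CA $\mathcal{U}$ such that $\mathcal{B}\sqsubseteq\mathcal{U}$ for every stochastic CA $\mathcal{B}$ (i.e. there is no $\sqsubseteq$-universal stochastic CA).
   Context: A stochastic CA is $(Q,R,V,V',f)$ with $Q$ finite states, $R$ finite random symbols, $V=\{v_1,\dots,v_r\}$, $V'=\{v'_1,\dots,v'_{r'}\}$ finite subsets of $\mathbb{Z}$, $f:Q^r\times R^{r'}\to Q$; explicit global function $F(c,s)_z=f((c_{z+v_1},\dots,c_{z+v_r}),(s_{z+v'_1},\dots,s_{z+v'_{r'}}))$. $\nu_R$ is the uniform Bernoulli measure on $R^{\mathbb{Z}}$; the stochastic global function $S_F(c)$ is the law of $F(c,s)$ for $s\sim\nu_R$. Iterates: $F^0(c)=c$, $F^{t+1}(c,s^1,\dots,s^{t+1})=F(F^t(c,s^1,\dots,s^t),s^{t+1})$. Restriction: for injective $i:Q'\to Q$ with $Y=i(Q')^{\mathbb{Z}}$ satisfying $F(Y,R^{\mathbb{Z}})\subseteq Y$, the $i$-restriction has states $Q'$, random symbols $R$, explicit global function $I^{-1}(F(I(c),s))$ ($I$ the cellwise extension of $i$). Projection: for surjective $\pi:Q\to Q'$ with cellwise extension $\Pi$ such that $\Pi(F(c,s))=\Pi(F(c',s))$ whenever $\Pi(c)=\Pi(c')$, the $\pi$-projection has states $Q'$, random symbols $R$, explicit global function $(c',s)\mapsto\Pi(F(c,s))$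 for any $c\in\Pi^{-1}(c')$. Rescaling with $m,t\ge1,k\in\mathbb{Z}$: $\mathcal{A}^{\langle m,t,k\rangle}$ has states $Q^m$, random symbols $(R^m)^t$, explicit global function $b_m\circ\sigma_k\circ F^t(b_m^{-1}(c),b_m^{-1}(s^1),\dots,b_m^{-1}(s^t))$ where $s^i_j=(s_j)_i$, $\sigma_k(c)_z=c_{z+k}$, $b_m(c)_z=(c_{mz},\dots,c_{mz+m-1})$. $\mathcal{A}_1\sqsubseteq^S_i\mathcal{A}_2$ (resp. $\sqsubseteq^S_\pi$, $\sqsubseteq^S_m$) iff there are $m_1,m_2,t_1,t_2,k_1,k_2$ such that $\mathcal{A}_1^{\langle m_1,t_1,k_1\rangle}$ has the same stochastic global function as some $i$-restriction (resp. some $\pi$-projection, resp. some $\pi$-projection of some $i$-restriction) of $\mathcal{A}_2^{\langle m_2,t_2,k_2\rangle}$. *)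

From mathcomp Require Import all_boot all_order all_algebra.
Set Implicit Arguments. Unset Strict Implicit. Unset Printing Implicit Defensive.
Import Order.TTheory GRing.Theory Num.Theory.

(* Cells are indexed by Z = int. Q, R finite, R nonempty (needed for   *)
(* the uniform Bernoulli measure nu_R to exist).                       *)
Record sca := SCA {
  sQ : finType;
  sR : finType;
  sR_nonempty : (0 < #|sR|)%N;
  sr : nat;
  sr' : nat;
  sV : sr.-tuple int;
  sV' : sr'.-tuple int;
  sf : sr.-tuple sQ -> sr'.-tuple sR -> sQ }.

Definition gf (A : sca) : (int -> sQ A) -> (int -> sR A) -> (int -> sQ A) :=
  fun c s z => sf [tuple c (z + tnth (sV A) i)%R | i < sr A]
                  [tuple s (z + tnth (sV' A) j)%R | j < sr' A].
Arguments gf : clear implicits.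

(* The uniform Bernoulli measure nu_R on cylinder events of R^Z.       *)
(* An event E is determined by the window {a, ..., a+n-1}; then        *)
(* nu_R(E) = #{u in R^n | E(ext u)} / |R|^n.                           *)
Definition determined (R : Type) (E : pred (int -> R)) (a : int) (n : nat) :=
  forall s s' : int -> R,
    (forall i : 'I_n, s (a + i%:Z)%R = s' (a + i%:Z)%R) -> E s = E s'.

Definition ext (R : Type) (r0 : R) (a : int) (n : nat) (u : {ffun 'I_n -> R})
  : int -> R :=
  fun z => if (0 <= z - a)%R then
             (if @insub _ _ 'I_n `|z - a|%N is Some i then u i else r0)
           else r0.

Definition prob_is (R : finType) (E : pred (int -> R)) (p : rat) : Prop :=
  exists (a : int) (n : nat), determined E a n /\
    exists r0 : R,
      p = ((#|[set u : {ffun 'I_n -> R} | E (ext r0 a u)]|)%:R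
           / (#|R| ^ n)%:R)%R.

Definition cyl {Q : finType} {R : Type} (X : (int -> R) -> (int -> Q))
  (a : int) (n : nat) (w : {ffun 'I_n -> Q}) : pred (int -> R) :=
  fun s => [forall i : 'I_n, X s (a + i%:Z)%R == w i].
Arguments cyl {Q R} X a n w.

(* the law of X under nu_R1 equals the law of Y under nu_R2
   (equality of probability measures on Q^Z, tested on cylinders) *)
Definition same_law (Q R1 R2 : finType)
  (X : (int -> R1) -> (int -> Q)) (Y : (int -> R2) -> (int -> Q)) : Prop :=
  forall (a : int) (n : nat) (w : {ffun 'I_n -> Q}),
    exists p : rat, prob_is (cyl X a n w) p /\ prob_is (cyl Y a n w) p.

Definition same_sgf (Q R1 R2 : finType)
  (F : (int -> Q) -> (int -> R1) -> (int -> Q))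
  (G : (int -> Q) -> (int -> R2) -> (int -> Q)) : Prop :=
  forall c, same_law (F c) (G c).

Lemma modz_ltn (x : int) (m : nat) : (0 < m)%N -> (`|(x %% m%:Z)%Z|%N < m)%N.
Proof.
move=> Hm.
have H1 : (0 <= (x %% m%:Z)%Z)%R by apply: modz_ge0; rewrite eqz_nat -lt0n.
have H2 : ((x %% m%:Z)%Z < m%:Z)%R by apply: ltz_pmod; rewrite ltz_nat.
by rewrite -ltz_nat gez0_abs.
Qed.

Definition bm (T : Type) (m : nat) (c : int -> T) : int -> m.-tuple T :=
  fun z => [tuple c (z * m%:Z + i%:Z)%R | i < m].
Arguments bm {T} m c z.

Definition bm_inv (T : Type) (m : nat) (Hm : (0 < m)%N) (c : int -> m.-tuple T)
  : int -> T :=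
  fun x => tnth (c (x %/ m%:Z)%Z) (Ordinal (modz_ltn x Hm)).

Definition shift (T : Type) (k : int) (c : int -> T) : int -> T :=
  fun z => c (z + k)%R.

Definition iterF (Q R : Type) (F : (int -> Q) -> (int -> R) -> (int -> Q))
  (c : int -> Q) (ss : seq (int -> R)) : int -> Q := foldl F c ss.

(* explicit global function of A^<m,t,k>, where s^i_j = (s_j)_i *)
Definition rescale (Q R : Type) (F : (int -> Q) -> (int -> R) -> (int -> Q))
  (m : nat) (Hm : (0 < m)%N) (t : nat) (k : int)
  : (int -> m.-tuple Q) -> (int -> t.-tuple (m.-tuple R)) -> (int -> m.-tuple Q) :=
  fun c s =>
    bm m (shift k (iterF F (bm_inv Hm c)
            [seq bm_inv Hm (fun j => tnth (s j) i) | i <- enum 'I_t])).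
Arguments rescale {Q R} F {m} Hm t k _ _ _.

Definition restr_ok (Q' Q R : finType) (i : Q' -> Q)
  (F : (int -> Q) -> (int -> R) -> (int -> Q)) : Prop :=
  injective i /\
  forall (c : int -> Q) (s : int -> R),
    (forall z, exists q, c z = i q) -> forall z, exists q, F c s z = i q.

Definition restr (Q' Q R : finType) (i : Q' -> Q)
  (F : (int -> Q) -> (int -> R) -> (int -> Q))
  : (int -> Q') -> (int -> R) -> (int -> Q') :=
  fun c s z => odflt (c z) [pick x | i x == F (fun y => i (c y)) s z].

Definition proj_ok (Q Q' R : finType) (pi : Q -> Q')
  (F : (int -> Q) -> (int -> R) -> (int -> Q)) : Prop :=
  (forall y : Q', exists x, pi x = y) /\
  forall (c c' : int -> Q) (s : int -> R),
    (forall z, pi (c z) = pi (c' z)) ->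
    forall z, pi (F c s z) = pi (F c' s z).

(* G has the same stochastic global function as the pi-projection of F,
   whose explicit global function is (c', s) |-> Pi(F(c, s)) for any
   c in Pi^{-1}(c') *)
Definition same_sgf_proj (Q Q' R1 R : finType)
  (G : (int -> Q') -> (int -> R1) -> (int -> Q'))
  (pi : Q -> Q') (F : (int -> Q) -> (int -> R) -> (int -> Q)) : Prop :=
  forall (c' : int -> Q') (c : int -> Q), (forall z, pi (c z) = c' z) ->
    same_law (G c') (fun s z => pi (F c s z)).

Definition sim_i (A1 A2 : sca) : Prop :=
  exists (m1 : nat) (H1 : (0 < m1)%N) (t1 : nat) (k1 : int)
         (m2 : nat) (H2 : (0 < m2)%N) (t2 : nat) (k2 : int),
    (0 < t1)%N /\ (0 < t2)%N /\
    exists i : m1.-tuple (sQ A1) -> m2.-tuple (sQ A2),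
      restr_ok i (rescale (gf A2) H2 t2 k2) /\
      same_sgf (rescale (gf A1) H1 t1 k1) (restr i (rescale (gf A2) H2 t2 k2)).

Definition sim_pi (A1 A2 : sca) : Prop :=
  exists (m1 : nat) (H1 : (0 < m1)%N) (t1 : nat) (k1 : int)
         (m2 : nat) (H2 : (0 < m2)%N) (t2 : nat) (k2 : int),
    (0 < t1)%N /\ (0 < t2)%N /\
    exists pi : m2.-tuple (sQ A2) -> m1.-tuple (sQ A1),
      proj_ok pi (rescale (gf A2) H2 t2 k2) /\
      same_sgf_proj (rescale (gf A1) H1 t1 k1) pi (rescale (gf A2) H2 t2 k2).

Definition sim_m (A1 A2 : sca) : Prop :=
  exists (m1 : nat) (H1 : (0 < m1)%N) (t1 : nat) (k1 : int)
         (m2 : nat) (H2 : (0 < m2)%N) (t2 : nat) (k2 : int),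
    (0 < t1)%N /\ (0 < t2)%N /\
    exists (Q'' : finType) (i : Q'' -> m2.-tuple (sQ A2))
           (pi : Q'' -> m1.-tuple (sQ A1)),
      restr_ok i (rescale (gf A2) H2 t2 k2) /\
      proj_ok pi (restr i (rescale (gf A2) H2 t2 k2)) /\
      same_sgf_proj (rescale (gf A1) H1 t1 k1) pi
                    (restr i (rescale (gf A2) H2 t2 k2)).

From mathcomp Require Import all_boot all_order all_algebra.
Set Implicit Arguments. Unset Strict Implicit. Unset Printing Implicit Defensive.
Import Order.TTheory GRing.Theory Num.Theory.

(* A universal U must in particular simulate the "coin" CA whose cell becomes
   [s_z == 0] for a uniform random symbol s_z in an alphabet of size q.  Every
   cylinder probability of a rescaling of the coin has the form k / q^N, and the
   all-true cylinder is nontrivial, so 0 < k < q^N; every cylinder probability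
   of a rescaling of U has the form k' / |R_U|^N'.  Taking q = |R_U| + 1, which
   is coprime to |R_U|, the two fractions cannot agree. *)

Lemma ratio_coprime_denomsF (F : numFieldType) (k d k' d' : nat) :
  coprime d d' -> (0 < k < d)%N -> (k%:R / d%:R != k'%:R / d'%:R :> F)%R.
Proof.
move=> cop_dd' /andP[k_gt0 lt_kd].
have d_gt0 : (0 < d)%N by apply: leq_ltn_trans lt_kd.
have [d'0 | d'_gt0] := posnP d'.
  move: cop_dd' lt_kd; rewrite d'0 /coprime gcdn0 => /eqP ->.
  by rewrite ltnS leqNgt k_gt0.
rewrite eqr_div ?pnatr_eq0 -?lt0n // -!natrM eqr_nat; apply/negP => /eqP eq_cross.
have : (d %| k * d')%N by rewrite eq_cross dvdn_mull.
by rewrite Gauss_dvdl // => /(dvdn_leq k_gt0); rewrite leqNgt lt_kd.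
Qed.

Lemma ext_window (R : Type) (r0 : R) a n (u : {ffun 'I_n -> R}) (i : 'I_n) :
  ext r0 a u (a + i%:Z)%R = u i.
Proof. by rewrite /ext addrC addKr lez_nat absz_nat valK. Qed.

Lemma prob_is_proper_ratio (R : finType) (E : pred (int -> R)) p s_in s_out :
  E s_in -> ~~ E s_out -> prob_is E p ->
  exists k N, p = (k%:R / (#|R| ^ N)%:R)%R /\ (0 < k < #|R| ^ N)%N.
Proof.
move=> E_in E_out [a [N [detE [r0 ->]]]].
set A := [set u : {ffun 'I_N -> R} | E (ext r0 a u)].
have E_window s : E (ext r0 a [ffun i : 'I_N => s (a + i%:Z)%R]) = E s.
  by apply: detE => i; rewrite ext_window ffunE.
exists #|A|, N; split => //; apply/andP; split.
  apply/card_gt0P; exists [ffun i : 'I_N => s_in (a + i%:Z)%R].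
  by rewrite inE E_window.
have -> : (#|R| ^ N = #|{ffun 'I_N -> R}|)%N by rewrite card_ffun card_ord.
rewrite -cardsT; apply: proper_card; rewrite properT.
apply/eqP => A_full.
have : [ffun i : 'I_N => s_out (a + i%:Z)%R] \in A by rewrite A_full inE.
by rewrite inE E_window (negbTE E_out).
Qed.

Definition coin (n : nat) : sca :=
  @SCA bool 'I_n.+2 (ltac:(by rewrite card_ord)) 1 1 [tuple 0%R] [tuple 0%R]
    (fun _ s => tnth s ord0 == ord0).

Lemma iterF_coin n c (ss : seq (int -> 'I_n.+2)) s0 z : (0 < size ss)%N ->
  iterF (gf (coin n)) c ss z = (last s0 ss z == ord0).
Proof.
case/lastP: ss => // ss s _.
by rewrite /iterF foldl_rcons last_rcons /gf /= tnth_mktuple addr0.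
Qed.

Lemma rescale_coin_const n m (m_gt0 : (0 < m)%N) t (t_gt0 : (0 < t)%N) k c r z :
  rescale (gf (coin n)) m_gt0 t k c (fun=> [tuple [tuple r | _ < m] | _ < t]) z
  = [tuple r == ord0 | _ < m].
Proof.
apply: eq_from_tnth => j; rewrite /rescale /bm /shift !tnth_mktuple.
set layer := fun=> _.
rewrite (iterF_coin _ (layer (Ordinal t_gt0))).
  by rewrite last_map /layer /bm_inv !tnth_mktuple.
by rewrite size_map size_enum_ord.
Qed.

Lemma coin_law_coprimeF n m (m_gt0 : (0 < m)%N) t k c (R : finType)
    (Y : (int -> R) -> int -> m.-tuple bool) :
  (0 < t)%N -> coprime n.+2 #|R| ->
  ~ same_law (rescale (gf (coin n)) m_gt0 t k c) Y.
Proof.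
move=> t_gt0 cop_R same.
pose X := rescale (gf (coin n)) m_gt0 t k c.
pose all_true : {ffun 'I_1 -> m.-tuple bool} := [ffun=> [tuple true | _ < m]].
have [p [pX [a [N [_ [r0 pY]]]]]] := same 0%R 1%N all_true.
pose seed r : int -> t.-tuple (m.-tuple 'I_n.+2) :=
  fun=> [tuple [tuple r | _ < m] | _ < t].
have X_const r : cyl X 0%R 1 all_true (seed r) = (r == ord0).
  apply/forallP/idP => [/(_ ord0) | r0E i];
    rewrite /X /all_true /seed (rescale_coin_const _ t_gt0) ffunE.
    by move/eqP/(congr1 (fun x => tnth x (Ordinal m_gt0))); rewrite !tnth_mktuple => ->.
  by rewrite r0E.
have true_in : cyl X 0%R 1 all_true (seed ord0) by rewrite X_const.
have true_out : ~~ cyl X 0%R 1 all_true (seed (@Ordinal n.+2 1 isT)).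
  by rewrite X_const.
have [k' [N' [pE kD]]] := prob_is_proper_ratio true_in true_out pX.
move: pY; rewrite pE => /eqP; apply/negP/ratio_coprime_denomsF => //.
by rewrite !card_tuple card_ord -!expnM; apply/coprimeXl/coprimeXr.
Qed.

Definition realizes_rescaled_laws (U A : sca) : Prop :=
  exists (m : nat) (m_gt0 : (0 < m)%N) (t : nat) (k : int) (m' t' : nat),
    (0 < t)%N /\
    forall c : int -> m.-tuple (sQ A),
    exists Y : (int -> t'.-tuple (m'.-tuple (sR U))) -> int -> m.-tuple (sQ A),
      same_law (rescale (gf A) m_gt0 t k c) Y.

Lemma same_sgf_proj_law (Q Q' R' R : finType)
    (G : (int -> Q') -> (int -> R') -> int -> Q') (pi : Q -> Q')
    (F : (int -> Q) -> (int -> R) -> int -> Q) :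
  (forall y, exists x, pi x = y) -> same_sgf_proj G pi F ->
  forall c', exists Y : (int -> R) -> int -> Q', same_law (G c') Y.
Proof.
move=> pi_onto sameGF c'.
have pi_ontoP y : exists x, pi x == y by have [x <-] := pi_onto y; exists x.
pose c z := xchoose (pi_ontoP (c' z)).
exists (fun s z => pi (F c s z)); apply: sameGF => z.
exact/eqP/(xchooseP (pi_ontoP (c' z))).
Qed.

Lemma sim_i_realizes A U : sim_i A U -> realizes_rescaled_laws U A.
Proof.
move=> [m [m_gt0 [t [k [m' [? [t' [? [t_gt0 [_ [? [_ sameAU]]]]]]]]]]]].
by exists m, m_gt0, t, k, m', t'; split=> // c; eexists; apply: sameAU.
Qed.

Lemma sim_pi_realizes A U : sim_pi A U -> realizes_rescaled_laws U A.
Proof.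
move=> [m [m_gt0 [t [k [m' [? [t' [? [t_gt0 [_ [pi [[pi_onto _] sameAU]]]]]]]]]]]].
exists m, m_gt0, t, k, m', t'; split=> //.
exact: same_sgf_proj_law pi_onto sameAU.
Qed.

Lemma sim_m_realizes A U : sim_m A U -> realizes_rescaled_laws U A.
Proof.
move=> [m [m_gt0 [t [k [m' [? [t' [? [t_gt0 [_ [? [? [pi [_ [[pi_onto _] sameAU]]]]]]]]]]]]]]].
exists m, m_gt0, t, k, m', t'; split=> //.
exact: same_sgf_proj_law pi_onto sameAU.
Qed.

Lemma coin_not_realized U : ~ realizes_rescaled_laws U (coin #|sR U|.-1).
Proof.
move=> [m [m_gt0 [t [k [m' [t' [t_gt0 realized]]]]]]].
have [Y sameY] := realized (fun=> [tuple true | _ < m]).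
apply: coin_law_coprimeF t_gt0 _ sameY.
rewrite !card_tuple -!expnM; apply: coprimeXr.
by rewrite prednK ?coprimeSn ?sR_nonempty.
Qed.

Theorem corollary1 :
  (~ exists U : sca, forall B : sca, sim_i B U) /\
  (~ exists U : sca, forall B : sca, sim_pi B U) /\
  (~ exists U : sca, forall B : sca, sim_m B U).
Proof.
split; [|split] => -[U universal]; apply: (@coin_not_realized U).
- exact/sim_i_realizes/universal.
- exact/sim_pi_realizes/universal.
- exact/sim_m_realizes/universal.
Qed.
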